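(* Let $s\ge 1$, $i$ and $j'$ be integers with $s\le i\le 2s$ and $0\le j'\le s$. Then $$\sum_{t=0}^{2s-i}\frac{(-1)^t}{2s-t}\binom{2s-i}{t}\binom{2s-t-1-j'}{s-j'}=\frac{(-1)^{s+i+j'}}{i}\binom{s}{j'}\binom{2s}{i}^{-1}+\sum_{t=1}^{s-j'}\frac{(-1)^{t+1}}{t}\binom{i-j'-1}{s+t-1}\binom{s}{t-1}\binom{s-j'}{t}^{-1}.$$
   Context: For an integer $b\ge 0$ and any integer $a$, $\binom{a}{b}=a(a-1)\cdots(a-b+1)/b!$; in particular $\binom{a}{b}=0$ when $0\le a<b$. An empty sum is $0$. *)

From HB Require Import structures.
From mathcomp Require Import all_boot all_order all_algebra.
Set Implicit Arguments. Unset Strict Implicit. Unset Printing Implicit Defensive.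
Import Order.TTheory GRing.Theory Num.Theory.
Local Open Scope ring_scope.

Definition binz (a : int) (b : nat) : rat :=
  (\prod_(k < b) (a%:~R - k%:R)) / (b`!)%:R.

From mathcomp Require Import all_boot all_order all_algebra.
From mathcomp Require Import ring zify.
Set Implicit Arguments. Unset Strict Implicit. Unset Printing Implicit Defensive.
Import Order.TTheory GRing.Theory Num.Theory.
Local Open Scope ring_scope.

(* Put n = 2s - i and m = s - j.  The left-hand side is the alternating sum
   sum_t (-1)^t C(n,t) f(t) of f(t) = binom(s+m-1-t, m) / (2s-t).  Telescoping
   the difference of the falling factorials of z = s+m-1-x and w = m-1-s, where
   z - w = 2s - x, gives
     binom(s+m-1-x, m) = binom(m-1-s, m) + (2s-x) sum_k c_k binom(s+m-1-x, m-k)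
   with c_k = expansion_coef s m k the coefficients of the right-hand sum.  So
   f(t) splits into a multiple of 1/(2s-t), whose alternating sum is
   (-1)^n n! / (2s)(2s-1)...(2s-n) and yields the first term, plus a combination
   of the binom(x-t, r), whose alternating sums are binom(x-n, r-n) by iterating
   Pascal's rule. *)

Section FallingFactorial.
Variable R : comPzRingType.

Definition ffactr (x : R) (k : nat) : R := \prod_(l < k) (x - l%:R).

Lemma ffactrSr x k : ffactr x k.+1 = ffactr x k * (x - k%:R).
Proof. by rewrite /ffactr big_ord_recr. Qed.

Lemma ffactrSl x k : ffactr x k.+1 = x * ffactr (x - 1) k.
Proof.
rewrite /ffactr big_ord_recl subr0; congr (_ * _); apply: eq_bigr => l _.
by rewrite lift0 -natr1; ring.
Qed.

Lemma ffactr_nat n k : ffactr n%:R k = (n ^_ k)%:R.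
Proof.
elim: k => [|k IHk]; first by rewrite /ffactr big_ord0.
rewrite ffactrSr IHk ffactnSr natrM.
have [le_kn | lt_nk] := leqP k n; first by rewrite natrB.
by rewrite ffact_small // !mul0r.
Qed.

Lemma prod_natr_sub k y :
  \prod_(l < k) (l%:R - y) = (-1) ^+ k * ffactr y k.
Proof.
elim: k => [|k IHk]; first by rewrite /ffactr !big_ord0 mul1r.
by rewrite big_ord_recr /= IHk ffactrSr exprS; ring.
Qed.

Lemma ffactr_reflect m y : ffactr (m%:R - 1 - y) m = (-1) ^+ m * ffactr y m.
Proof.
rewrite -prod_natr_sub.
elim: m => [|m IHm]; first by rewrite /ffactr !big_ord0.
rewrite ffactrSl big_ord_recr /= -natr1.
have -> : m%:R + 1 - 1 - y - 1 = m%:R - 1 - y by ring.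
rewrite IHm; ring.
Qed.

Lemma prod_tail_reflect m t y : (t < m)%N ->
  \prod_(t.+1 <= l < m) (m%:R - 1 - y - l%:R)
  = (-1) ^+ (m - t.+1) * ffactr y (m - t.+1).
Proof.
move=> lt_tm; rewrite -prod_natr_sub.
rewrite big_nat_rev -{1}(add0n t.+1) big_addn big_mkord; apply: eq_bigr => l _.
have lt_l := ltn_ord l.
have -> : (0 + t.+1 + m - (l + t.+1).+1 = m - l.+1)%N by lia.
by rewrite natrB; [rewrite -natr1; ring | lia].
Qed.

Lemma prodrB_telescope (f g : nat -> R) m :
  \prod_(l < m) f l - \prod_(l < m) g l
  = \sum_(t < m) (\prod_(l < t) f l) * (f t - g t) * \prod_(t.+1 <= l < m) g l.
Proof.
pose P t := \prod_(l < t) f l * \prod_(t <= l < m) g l.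
rewrite -(big_mkord xpredT
  (fun t => \prod_(l < t) f l * (f t - g t) * \prod_(t.+1 <= l < m) g l)).
rewrite (@telescope_sumr_eq _ _ _ P) // => [|t /andP [_ lt_tm]].
  by rewrite /P big_geq // big_ord0 big_mkord mulr1 mul1r.
by rewrite /P big_ord_recr (big_ltn lt_tm) /=; ring.
Qed.

End FallingFactorial.

Section AlternatingSum.
Variable R : comPzRingType.
Implicit Types (f g : nat -> R) (n : nat).

Definition alt_binsum n f : R := \sum_(t < n.+1) (-1) ^+ t * 'C(n, t)%:R * f t.

Lemma eq_alt_binsum n f g :
  (forall t, (t <= n)%N -> f t = g t) -> alt_binsum n f = alt_binsum n g.
Proof. by move=> eq_fg; apply: eq_bigr => t _; rewrite eq_fg // -ltnS ltn_ord. Qed.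

Lemma alt_binsumD n f g :
  alt_binsum n (fun t => f t + g t) = alt_binsum n f + alt_binsum n g.
Proof. by rewrite -big_split; apply: eq_bigr => t _; rewrite mulrDr. Qed.

Lemma alt_binsumB n f g :
  alt_binsum n (fun t => f t - g t) = alt_binsum n f - alt_binsum n g.
Proof. by rewrite -sumrB; apply: eq_bigr => t _; rewrite mulrBr. Qed.

Lemma alt_binsumMl n c f : alt_binsum n (fun t => c * f t) = c * alt_binsum n f.
Proof. by rewrite mulr_sumr; apply: eq_bigr => t _; rewrite mulrCA. Qed.

Lemma alt_binsum_sum n (I : Type) (r : seq I) (P : pred I) (F : I -> nat -> R) :
  alt_binsum n (fun t => \sum_(j <- r | P j) F j t)
  = \sum_(j <- r | P j) alt_binsum n (F j).
Proof.
rewrite /alt_binsum exchange_big /=; apply: eq_bigr => t _.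
by rewrite mulr_sumr.
Qed.

Lemma alt_binsumS n f : alt_binsum n.+1 f = alt_binsum n (fun t => f t - f t.+1).
Proof.
rewrite /alt_binsum big_ord_recl /=.
under eq_bigr do rewrite /bump /= add1n binS natrD mulrDr mulrDl.
rewrite big_split /= addrA.
have -> : (-1) ^+ 0 * 'C(n.+1, 0)%:R * f 0%N
          + \sum_(i < n.+1) (-1) ^+ i.+1 * 'C(n, i.+1)%:R * f i.+1
        = \sum_(t < n.+1) (-1) ^+ t * 'C(n, t)%:R * f t.
  rewrite big_ord_recr /= (@bin_small n n.+1) // mulr0 mul0r addr0.
  rewrite [RHS]big_ord_recl !bin0.
  by congr (_ + _); apply: eq_bigr => i _; rewrite /bump /= add1n.
rewrite -big_split /=; apply: eq_bigr => t _; rewrite exprS; ring.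
Qed.

End AlternatingSum.

Section GeneralizedBinomial.
Variable R : numFieldType.
Implicit Types (x : R) (k n : nat).

Definition binr x k : R := ffactr x k / (k`!)%:R.

Lemma natr_fact_neq0 k : (k`!)%:R != 0 :> R.
Proof. by rewrite pnatr_eq0 -lt0n fact_gt0. Qed.

Lemma binr0 x : binr x 0 = 1.
Proof. by rewrite /binr /ffactr big_ord0 divr1. Qed.

Lemma binr_nat n k : binr n%:R k = 'C(n, k)%:R.
Proof. by rewrite /binr ffactr_nat -bin_ffact natrM mulfK ?natr_fact_neq0. Qed.

Lemma binrS x k : binr (x + 1) k.+1 = binr x k.+1 + binr x k.
Proof.
rewrite /binr ffactrSl ffactrSr addrK factS natrM.
by field; rewrite natr_fact_neq0 addrC natr1 pnatr_eq0.
Qed.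

Lemma binr_reflect_nat m n : binr (m%:R - 1 - n%:R) m = (-1) ^+ m * 'C(n, m)%:R.
Proof. by rewrite /binr ffactr_reflect -mulrA -binr_nat. Qed.

Lemma alt_binsum_binr n x r :
  alt_binsum n (fun t => binr (x - t%:R) r)
  = if (n <= r)%N then binr (x - n%:R) (r - n) else 0.
Proof.
elim: n x r => [|n IHn] x r.
  by rewrite /alt_binsum big_ord1 subn0 expr0 bin0 !mul1r subr0.
rewrite alt_binsumS; case: r => [|r].
  by rewrite /alt_binsum big1 // => t _; rewrite !binr0 subrr mulr0.
have Delta t : binr (x - t%:R) r.+1 - binr (x - t.+1%:R) r.+1 = binr (x - 1 - t%:R) r.
  have -> : x - t%:R = x - t.+1%:R + 1 by rewrite -natr1; ring.
  by rewrite binrS addrAC subrr add0r -natr1; congr binr; ring.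
rewrite (eq_alt_binsum (fun t _ => Delta t)).
rewrite (IHn (x - 1)) ltnS subSS -natr1.
by congr (if _ then binr _ _ else _); ring.
Qed.

Lemma alt_binsum_inv n x : (forall k, (k <= n)%N -> x - k%:R != 0) ->
  alt_binsum n (fun t => (x - t%:R)^-1) = (-1) ^+ n * (n`!)%:R / ffactr x n.+1.
Proof.
elim: n x => [|n IHn] x nz_x.
  by rewrite /alt_binsum /ffactr !big_ord1 /= !mul1r subr0.
have Delta t : (x - t%:R)^-1 - (x - t.+1%:R)^-1 = (x - t%:R)^-1 - (x - 1 - t%:R)^-1.
  by rewrite -natr1 opprD addrA addrAC.
rewrite alt_binsumS (eq_alt_binsum (fun t _ => Delta t)) alt_binsumB.
rewrite !IHn => [|k le_kn|k le_kn].
- have nz_ff : ffactr x n.+1 != 0 by apply/prodf_neq0 => k _; apply/nz_x/ltnW.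
  have nz_xn : x - n.+1%:R != 0 by apply: nz_x.
  have nz_x0 : x != 0 by have := nz_x 0%N isT; rewrite subr0.
  have ffactr_predE : ffactr (x - 1) n.+1 = ffactr x n.+1 * (x - n.+1%:R) / x.
    by rewrite -ffactrSr [ffactr x _]ffactrSl mulrC mulKf.
  rewrite ffactr_predE [ffactr x n.+2]ffactrSr factS natrM exprS.
  by field; rewrite [1 + _]addrC natr1 nz_xn nz_ff nz_x0.
- by rewrite -addrA -opprD [1 + _]addrC natr1; apply: nz_x.
- by apply/nz_x/leqW.
Qed.

Definition expansion_coef (s m t : nat) : R :=
  (-1) ^+ (t + 1) / t%:R * 'C(s, t - 1)%:R / 'C(m, t)%:R.

Lemma expansion_coefE s m t z : (t < m)%N ->
  ffactr z t * ((-1) ^+ (m - t.+1) * ffactr s%:R (m - t.+1))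
  = (m`!)%:R * (expansion_coef s m (m - t) * binr z t).
Proof.
move=> lt_tm; have [k ->] : exists k, m = (t + k.+1)%N by exists (m - t.+1)%N; lia.
have -> : (t + k.+1 - t.+1 = k)%N by lia.
have -> : (t + k.+1 - t = k.+1)%N by lia.
rewrite /expansion_coef /binr ffactr_nat -bin_ffact addn1 subn1 /=.
have := bin_fact (leq_addl t k.+1); rewrite addnK => fact_split.
rewrite -fact_split factS !natrM !exprS !mulN1r opprK.
have nz_fact_t := natr_fact_neq0 t.
have nz_bin : 'C(t + k.+1, k.+1)%:R != 0 :> R.
  by rewrite pnatr_eq0 -lt0n bin_gt0 leq_addl.
by field; rewrite nz_fact_t nz_bin addrC natr1 pnatr_eq0.
Qed.

Lemma binr_expansion s m x :
  binr (s%:R + m%:R - 1 - x) m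
  = binr (m%:R - 1 - s%:R) m
    + (2 * s%:R - x)
      * \sum_(1 <= t < m.+1)
          expansion_coef s m t * binr (s%:R + m%:R - 1 - x) (m - t).
Proof.
set z := s%:R + m%:R - 1 - x; set w := m%:R - 1 - s%:R.
suff ffactr_diff : ffactr z m - ffactr w m
    = (2 * s%:R - x) * (m`!)%:R
      * \sum_(1 <= t < m.+1) expansion_coef s m t * binr z (m - t).
  rewrite {1}/binr -[ffactr z m](subrK (ffactr w m)) ffactr_diff.
  by rewrite /binr; field; apply: natr_fact_neq0.
rewrite (prodrB_telescope (fun l => z - l%:R) (fun l => w - l%:R)).
rewrite big_add1 big_nat_rev big_mkord mulr_sumr.
apply: eq_bigr => [[t lt_tm]] _ /=.
have -> : z - t%:R - (w - t%:R) = 2 * s%:R - x by rewrite /z /w; ring.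
have -> : ((m - t.+1).+1 = m - t)%N by lia.
have -> : (m - (m - t) = t)%N by lia.
by rewrite prod_tail_reflect // -/(ffactr z t) mulrAC expansion_coefE //; ring.
Qed.

Lemma alt_binsum_recip_binr s n m : (0 < s)%N -> (n <= s)%N ->
  alt_binsum n (fun t => (2 * s - t)%:R^-1 * binr (s%:R + m%:R - 1 - t%:R) m)
  = (-1) ^+ (n + m) / (2 * s - n)%:R * 'C(s, m)%:R / 'C(2 * s, n)%:R
    + \sum_(1 <= t < m.+1)
        expansion_coef s m t * binr (s%:R + m%:R - 1 - n%:R) (s + t - 1).
Proof.
move=> s_gt0 le_ns.
have two_sE t : (t <= 2 * s)%N -> (2 * s - t)%:R = 2 * s%:R - t%:R :> R.
  by move=> le_t2s; rewrite natrB // natrM.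
have nz_two_s t : (t <= n)%N -> 2 * s%:R - t%:R != 0 :> R.
  by move=> le_tn; rewrite -two_sE ?pnatr_eq0; lia.
have split_term t : (t <= n)%N ->
    (2 * s - t)%:R^-1 * binr (s%:R + m%:R - 1 - t%:R) m
    = binr (m%:R - 1 - s%:R) m * (2 * s%:R - t%:R)^-1
      + \sum_(1 <= j < m.+1)
          expansion_coef s m j * binr (s%:R + m%:R - 1 - t%:R) (m - j).
  move=> le_tn; rewrite binr_expansion two_sE; last by lia.
  by field; apply: nz_two_s.
rewrite (eq_alt_binsum split_term) alt_binsumD alt_binsumMl alt_binsum_sum.
congr (_ + _).
  rewrite alt_binsum_inv => [|k le_kn]; last exact: nz_two_s.
  rewrite binr_reflect_nat -natrM ffactr_nat ffactnSr -bin_ffact exprD.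
  have nz_bin : 'C(2 * s, n)%:R != 0 :> R by rewrite pnatr_eq0 -lt0n bin_gt0; lia.
  have nz_i : (2 * s - n)%:R != 0 :> R by rewrite pnatr_eq0; lia.
  by rewrite !natrM; field; rewrite nz_bin nz_i natr_fact_neq0.
apply: eq_big_nat => j /andP [le1j le_jm].
rewrite alt_binsumMl alt_binsum_binr; congr (_ * _).
have -> : s%:R + m%:R - 1 - n%:R = (s + m - 1 - n)%:R :> R.
  by rewrite !natrB ?natrD //; lia.
rewrite !binr_nat; case: leqP => [le_n_mj | lt_mj_n].
  by rewrite -bin_sub; [congr (_ %:R); congr binomial | ]; lia.
by rewrite bin_small //; lia.
Qed.

End GeneralizedBinomial.

Lemma binzE a k : binz a k = binr (a%:~R) k.
Proof. by []. Qed.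

Lemma binz_nat n k : binz n%:Z k = 'C(n, k)%:R.
Proof. by rewrite -binr_nat /binz /binr /ffactr pmulrn. Qed.

Theorem proposition2 (s i j : nat) :
  (1 <= s)%N -> (s <= i)%N -> (i <= 2 * s)%N -> (j <= s)%N ->
  \sum_(0 <= t < (2 * s - i).+1)
     (-1) ^+ t / (2 * s - t)%:R
       * binz (2 * s - i)%:Z t
       * binz (2 * (s : int) - t%:Z - 1 - j%:Z) (s - j)
  = (-1) ^+ (s + i + j) / i%:R * binz s j / binz (2 * s)%:Z i
    + \sum_(1 <= t < (s - j).+1)
        (-1) ^+ (t + 1) / t%:R
          * binz (i%:Z - j%:Z - 1) (s + t - 1)
          * binz s (t - 1) / binz (s - j)%:Z t.
Proof.
move=> s_gt0 le_si le_i2s le_js.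
set n := (2 * s - i)%N; set m := (s - j)%N.
have iE : i%:R = 2 * s%:R - n%:R :> rat.
  have -> : i = (2 * s - n)%N by lia.
  by rewrite natrB ?natrM //; lia.
have jE : j%:R = s%:R - m%:R :> rat.
  have -> : j = (s - m)%N by lia.
  by rewrite natrB //; lia.
transitivity (alt_binsum n
    (fun t => (2 * s - t)%:R^-1 * binr (s%:R + m%:R - 1 - t%:R) m : rat)).
  rewrite big_mkord; apply: eq_bigr => t _.
  rewrite binz_nat binzE !intrB intrM -!pmulrn jE.
  have -> : 2 * s%:R - t%:R - 1 - (s%:R - m%:R) = s%:R + m%:R - 1 - t%:R :> rat.
    by ring.
  by ring.
rewrite alt_binsum_recip_binr; [congr (_ + _) | lia | lia].
  rewrite !binz_nat -(bin_sub le_js) -/m -(bin_sub le_i2s) -/n.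
  have -> : (2 * s - n)%N = i by lia.
  have -> : (s + i + j = n + m + 2 * (i + j - s))%N by lia.
  by rewrite [in RHS]exprD exprM sqrrN !expr1n mulr1.
apply: eq_big_nat => t _; rewrite /expansion_coef !binz_nat binzE.
have -> : (i%:Z - j%:Z - 1)%:~R = s%:R + m%:R - 1 - n%:R :> rat.
  by rewrite !intrB -!pmulrn iE jE; ring.
by ring.
Qed.
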